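(* For $0\le S\le S'$, one has $B^*(S')\le B^*(S)$; that is, increasing the solar panel size does not increase the minimum required battery capacity.
   Context: Fix a macro base station and a horizon of $N$ time slots. Let $e(k)\ge 0$ be the solar energy generated per unit panel area in slot $k$, $p(k)\ge 0$ the base station's energy consumption in slot $k$, and $\alpha(k)\in[0,1]$ the required green-energy fraction in slot $k$, $k=1,\dots,N$. For a panel size $S\ge0$ and battery capacity $B\ge 0$, the battery energy evolves as $b(0)=0$ and $$b(k)=\min\{\max\{b(k-1)+e(k)S-p(k),\,0\},\,B\},\quad k=1,\dots,N.$$ The pair $(S,B)$ is feasible if $b(k-1)+e(k)S\ge \alpha(k)p(k)$ for all $k=1,\dots,N$. The required battery capacity for panel size $S$ is $B^*(S)=\inf\{B\ge 0:(S,B)\text{ feasible}\}$, with $B^*(S)=+\infty$ if no such $B$ exists. *)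

From Stdlib Require Import Reals Lra Classical ClassicalEpsilon.
Open Scope R_scope.

(* Battery recursion: b(0)=0, b(k)=min{max{b(k-1)+e(k)S-p(k),0},B}.
   Sequences e p alpha are indexed by nat; slots are k = 1..N. *)
Fixpoint batt (e p : nat -> R) (S B : R) (k : nat) : R :=
  match k with
  | O => 0
  | Datatypes.S k' => Rmin (Rmax (batt e p S B k' + e k * S - p k) 0) B
  end.

Definition feasible (e p alpha : nat -> R) (N : nat) (S B : R) : Prop :=
  forall k, (1 <= k <= N)%nat ->
    batt e p S B (k - 1) + e k * S >= alpha k * p k.

Inductive ereal := Fin (x : R) | PInf.

Definition ele (x y : ereal) : Prop :=
  match x, y with
  | _, PInf => True
  | PInf, Fin _ => False
  | Fin a, Fin b => a <= b
  end.

Definition feasB (e p alpha : nat -> R) (N : nat) (S : R) (B : R) : Prop :=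
  0 <= B /\ feasible e p alpha N S B.

Definition is_inf (A : R -> Prop) (m : R) : Prop :=
  (forall x, A x -> m <= x) /\ (forall m', (forall x, A x -> m' <= x) -> m' <= m).

(* B*(S) = inf {B >= 0 : (S,B) feasible}, = +infinity if the set is empty.
   Defined via classical choice (the infimum exists since the set is bounded below by 0). *)
Definition Bstar (e p alpha : nat -> R) (N : nat) (S : R) : ereal :=
  match excluded_middle_informative (exists B, feasB e p alpha N S B) with
  | left _ => Fin (epsilon (inhabits 0) (is_inf (feasB e p alpha N S)))
  | right _ => PInf
  end.

(* Since e >= 0, a larger panel adds at least as much energy in every slot, and the
   clamping map x |-> min (max x 0) B is monotone, so the battery level is pointwise
   larger.  Hence every capacity feasible for S is feasible for S', and the infimum
   over a larger set of capacities can only be smaller. *)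

From Stdlib Require Import Reals.
From Stdlib Require Import Lra Lia Classical ClassicalEpsilon.
Open Scope R_scope.

Section PanelMonotonicity.

Variables (N : nat) (e p alpha : nat -> R).
Hypothesis he : forall k, (1 <= k <= N)%nat -> 0 <= e k.
Variables (S S' B : R).
Hypothesis hSS' : S <= S'.

Lemma batt_le_panel k : (k <= N)%nat -> batt e p S B k <= batt e p S' B k.
Proof.
  induction k as [|k IH]; intros Hk; simpl; [lra|].
  assert (batt_le : batt e p S B k <= batt e p S' B k) by (apply IH; lia).
  assert (gain_le : e (Datatypes.S k) * S <= e (Datatypes.S k) * S').
  { apply Rmult_le_compat_l; [apply he; lia | exact hSS']. }
  apply Rle_min_compat_r, Rle_max_compat_r; lra.
Qed.

Lemma feasible_le_panel :
  feasible e p alpha N S B -> feasible e p alpha N S' B.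
Proof.
  intros F k Hk; specialize (F k Hk).
  pose proof (batt_le_panel (k - 1) ltac:(lia)) as batt_le.
  assert (gain_le : e k * S <= e k * S').
  { apply Rmult_le_compat_l; [apply he; lia | exact hSS']. }
  lra.
Qed.

End PanelMonotonicity.

Lemma is_inf_exists (A : R -> Prop) (lb : R) :
  (exists x, A x) -> (forall x, A x -> lb <= x) -> exists m, is_inf A m.
Proof.
  intros [x0 Ax0] Hlb.
  destruct (completeness (fun y => A (- y))) as [l [l_ub l_least]].
  - exists (- lb); intros y Ay; specialize (Hlb _ Ay); lra.
  - exists (- x0); rewrite Ropp_involutive; exact Ax0.
  - exists (- l); split.
    + intros x Ax.
      assert (- x <= l) by (apply l_ub; rewrite Ropp_involutive; exact Ax).
      lra.
    + intros m' Hm'.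
      assert (l <= - m') by (apply l_least; intros y Ay; specialize (Hm' _ Ay); lra).
      lra.
Qed.

Lemma is_inf_le_incl (A A' : R -> Prop) (m m' : R) :
  (forall x, A x -> A' x) -> is_inf A m -> is_inf A' m' -> m' <= m.
Proof.
  intros AA' [_ m_glb] [m'_lb _].
  apply m_glb; intros x Ax; exact (m'_lb x (AA' x Ax)).
Qed.

Lemma Bstar_fin_is_inf (e p alpha : nat -> R) (N : nat) (S : R) :
  (exists B, feasB e p alpha N S B) ->
  exists m, Bstar e p alpha N S = Fin m /\ is_inf (feasB e p alpha N S) m.
Proof.
  intros Hex; unfold Bstar.
  destruct (excluded_middle_informative _) as [_|]; [|contradiction].
  eexists; split; [reflexivity|].
  apply epsilon_spec, (is_inf_exists _ 0 Hex); intros x [Hx _]; exact Hx.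
Qed.

Lemma Bstar_le_incl (e p alpha : nat -> R) (N : nat) (S S' : R) :
  (forall B, feasB e p alpha N S B -> feasB e p alpha N S' B) ->
  ele (Bstar e p alpha N S') (Bstar e p alpha N S).
Proof.
  intros incl.
  destruct (classic (exists B, feasB e p alpha N S B)) as [[B HB]|none].
  - destruct (Bstar_fin_is_inf e p alpha N S (ex_intro _ B HB)) as [m [-> Hm]].
    destruct (Bstar_fin_is_inf e p alpha N S' (ex_intro _ B (incl B HB)))
      as [m' [-> Hm']].
    exact (is_inf_le_incl _ _ _ _ incl Hm Hm').
  - unfold Bstar at 2.
    destruct (excluded_middle_informative _) as [|_]; [contradiction|].
    destruct (Bstar e p alpha N S'); exact I.
Qed.

Theorem lemma2 (N : nat) (e p alpha : nat -> R)
  (he : forall k, (1 <= k <= N)%nat -> 0 <= e k)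
  (hp : forall k, (1 <= k <= N)%nat -> 0 <= p k)
  (halpha : forall k, (1 <= k <= N)%nat -> 0 <= alpha k <= 1)
  (S S' : R) (hS : 0 <= S) (hSS' : S <= S') :
  ele (Bstar e p alpha N S') (Bstar e p alpha N S).
Proof.
  apply Bstar_le_incl; intros B [HB FB].
  split; [exact HB|].
  exact (feasible_le_panel N e p alpha he S S' B hSS' FB).
Qed.
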